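(* Let $\mathfrak g$ be a real nilpotent Lie algebra with a Ricci-flat metric $\langle,\rangle_{\mathfrak g}$. Let $\mathfrak a\subset\operatorname{Der}\mathfrak g$ be a Lie subalgebra of derivations that are self-adjoint with respect to $\langle,\rangle_{\mathfrak g}$, and assume $\operatorname{Tr}(X\circ Y)=0$ for all $X,Y\in\mathfrak a$. (1) If all elements of $\mathfrak a$ are trace-free, then for any metric $\langle,\rangle_{\mathfrak a}$ on $\mathfrak a$, the semidirect product $\tilde{\mathfrak g}=\mathfrak g\rtimes\mathfrak a$ (with $[X,v]=X(v)$ for $X\in\mathfrak a$, $v\in\mathfrak g$) endowed with the metric $\langle,\rangle_{\mathfrak g}+\langle,\rangle_{\mathfrak a}$ ($\mathfrak g\perp\mathfrak a$) is Ricci-flat and $\mathfrak g\oplus^\perp\mathfrak a$ is a pseudo-Iwasawa decomposition. (2) If not all elements of $\mathfrak a$ are trace-free, let $\mathfrak a_0\subset\mathfrak a$ be the subspace of trace-free elements, and let $\langle,\rangle_{\mathfrak a}$ be any metric on $\mathfrak a$ whose restriction to $\mathfrak a_0$ is nondegenerate. Let $\tilde{\mathfrak g}=\mathfrak g\rtimes(\mathfrak a\oplus\operatorname{Span}\{H\})$, where $H$ acts trivially ($\operatorname{ad}H=0$) and $\mathfrak a$ acts as in (1), endowed with the symmetric bilinear form $\langle,\rangle_{\mathfrak g}+\langle,\rangle_{\mathfrak a}+\langle,\rangle_H$, where $\mathfrak g$ is orthogonal to $\mathfrak a\oplus\operatorname{Span}\{H\}$, and $\langle,\rangle_H$ is the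 symmetric form with $\langle X,H\rangle_H=\operatorname{Tr}X$ for $X\in\mathfrak a$, $\langle H,H\rangle_H=0$ and vanishing on $\mathfrak a\times\mathfrak a$. Then this defines a Ricci-flat metric on $\tilde{\mathfrak g}$ and $\mathfrak g\oplus^\perp(\mathfrak a\oplus\operatorname{Span}\{H\})$ is a pseudo-Iwasawa decomposition.
   Context: A metric on a Lie algebra (or vector space) is a nondegenerate symmetric bilinear form, possibly indefinite; Ricci tensors are those of the corresponding left-invariant pseudo-Riemannian metrics on simply connected Lie groups. A pseudo-Iwasawa decomposition of a metric Lie algebra $\tilde{\mathfrak g}$ is an orthogonal direct sum of vector spaces $\tilde{\mathfrak g}=\mathfrak g\oplus^\perp\mathfrak b$ with $\mathfrak g$ a nilpotent ideal, $\mathfrak b$ an abelian subalgebra, and $\operatorname{ad}X$ self-adjoint for every $X\in\mathfrak b$. *)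

(* Real Lie algebras are modelled in coordinates:
   a Lie algebra of dimension N is a bracket on column vectors 'cV[R]_N,
   a metric is a symmetric invertible Gram matrix. *)
From mathcomp Require Import all_boot all_order all_algebra.
From mathcomp Require Import reals.
Set Implicit Arguments.
Unset Strict Implicit.
Unset Printing Implicit Defensive.
Import Order.TTheory GRing.Theory Num.Theory.
Local Open Scope ring_scope.

Section MetricLie.
Variable R : realType.

Definition form N (G : 'M[R]_N) (u v : 'cV[R]_N) : R := (u^T *m G *m v) 0 0.

Definition ev N (i : 'I_N) : 'cV[R]_N := delta_mx i 0.

Definition lie_bracket N (br : 'cV[R]_N -> 'cV[R]_N -> 'cV[R]_N) : Prop :=
  [/\ (forall (a : R) u v w, br (a *: u + v) w = a *: br u w + br v w),
      (forall (a : R) u v w, br u (a *: v + w) = a *: br u v + br u w),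
      (forall u, br u u = 0) &
      (forall u v w, br u (br v w) + br v (br w u) + br w (br u v) = 0)].

(* nilpotent: the lower central series terminates, i.e. all right-nested
   brackets [x_1,[x_2,...[x_k,y]...]] of some fixed length vanish *)
Definition nilpotent_lie N (br : 'cV[R]_N -> 'cV[R]_N -> 'cV[R]_N) : Prop :=
  exists k : nat, forall (xs : seq 'cV[R]_N) (y : 'cV[R]_N),
    size xs = k -> foldr br y xs = 0.

Definition is_metric N (G : 'M[R]_N) : Prop := G^T = G /\ G \in unitmx.

(* Levi-Civita connection of the left-invariant metric (Koszul formula):
   2<nabla_x y, z> = <[x,y],z> - <[y,z],x> + <[z,x],y> *)
Definition nabla N (br : 'cV[R]_N -> 'cV[R]_N -> 'cV[R]_N) (G : 'M[R]_N)
  (x y : 'cV[R]_N) : 'cV[R]_N :=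
  invmx G *m \col_k (2^-1 * (form G (br x y) (ev k) - form G (br y (ev k)) x
                              + form G (br (ev k) x) y)).

Definition curv N br (G : 'M[R]_N) (x y z : 'cV[R]_N) : 'cV[R]_N :=
  nabla br G x (nabla br G y z) - nabla br G y (nabla br G x z)
  - nabla br G (br x y) z.

Definition ricci N br (G : 'M[R]_N) (y z : 'cV[R]_N) : R :=
  \sum_(i < N) (curv br G (ev i) y z) i 0.

Definition ricci_flat N br (G : 'M[R]_N) : Prop :=
  forall y z, ricci br G y z = 0.

Definition derivation N (br : 'cV[R]_N -> 'cV[R]_N -> 'cV[R]_N) (D : 'M[R]_N) :=
  forall x y, D *m br x y = br (D *m x) y + br x (D *m y).

Definition self_adjoint N (G : 'M[R]_N) (D : 'M[R]_N) :=
  forall x y, form G (D *m x) y = form G x (D *m y).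

Definition comb n m (D : 'I_m -> 'M[R]_n) (x : 'cV[R]_m) : 'M[R]_n :=
  \sum_(i < m) x i 0 *: D i.

Definition lin_indep n m (D : 'I_m -> 'M[R]_n) : Prop :=
  forall x : 'cV[R]_m, comb D x = 0 -> x = 0.

(* bracket on a, in coordinates w.r.t. the basis, from structure constants *)
Definition bra m (ca : 'I_m -> 'I_m -> 'cV[R]_m) (x y : 'cV[R]_m) : 'cV[R]_m :=
  \sum_(i < m) \sum_(j < m) (x i 0 * y j 0) *: ca i j.

(* semidirect product g x| b on 'cV_(n+k): first n coordinates = g,
   last k coordinates = b acting on g through A *)
Definition semibr n k (bg : 'cV[R]_n -> 'cV[R]_n -> 'cV[R]_n)
  (A : 'cV[R]_k -> 'M[R]_n) (bb : 'cV[R]_k -> 'cV[R]_k -> 'cV[R]_k)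
  (u v : 'cV[R]_(n + k)) : 'cV[R]_(n + k) :=
  col_mx (bg (usubmx u) (usubmx v) + A (dsubmx u) *m usubmx v
          - A (dsubmx v) *m usubmx u)
         (bb (dsubmx u) (dsubmx v)).

(* pseudo-Iwasawa decomposition g~ = g (+)^perp b, where g = first n
   coordinates and b = last k coordinates *)
Definition pseudo_iwasawa n k (br : 'cV[R]_(n + k) -> 'cV[R]_(n + k) -> 'cV[R]_(n + k))
  (Gt : 'M[R]_(n + k)) : Prop :=
  [/\ (forall (v : 'cV[R]_n) (x : 'cV[R]_k),
         form Gt (col_mx v 0) (col_mx 0 x) = 0),
      (forall (u : 'cV[R]_(n + k)) (v : 'cV[R]_n), dsubmx (br u (col_mx v 0)) = 0),
      nilpotent_lie (fun v w : 'cV[R]_n => usubmx (br (col_mx v 0) (col_mx w 0))),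
      (forall x y : 'cV[R]_k, br (col_mx 0 x) (col_mx 0 y) = 0) &
      (forall (x : 'cV[R]_k) (u w : 'cV[R]_(n + k)),
         form Gt (br (col_mx 0 x) u) w = form Gt u (br (col_mx 0 x) w))].

Definition nondeg_on m (P : 'cV[R]_m -> Prop) (Ga : 'M[R]_m) : Prop :=
  forall x, P x -> (forall y, P y -> form Ga x y = 0) -> x = 0.

(* part (2): b = a (+) Span{H}, coordinates (x, h) with H = last coordinate *)
Definition actH n m (D : 'I_m -> 'M[R]_n) (z : 'cV[R]_(m + 1)) : 'M[R]_n :=
  comb D (usubmx z).

Definition braH m (ca : 'I_m -> 'I_m -> 'cV[R]_m) (z w : 'cV[R]_(m + 1))
  : 'cV[R]_(m + 1) := col_mx (bra ca (usubmx z) (usubmx w)) 0.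

(* <,>_a + <,>_H : <X,H> = Tr X, <H,H> = 0 *)
Definition metricH n m (D : 'I_m -> 'M[R]_n) (Ga : 'M[R]_m) : 'M[R]_(m + 1) :=
  block_mx Ga (\matrix_(i < m, j < 1) \tr (D i))
              (\matrix_(i < 1, j < m) \tr (D j)) 0.

End MetricLie.

(* For commuting self-adjoint derivations A x of g, the Levi-Civita connection of
   g x| b with the orthogonal sum metric is explicit:
     nabla_(a,X) (b,Y) = (nabla^g_a b - A Y a, sff a b),  <sff a b, Z> = <A Z a, b>;
   in particular the b-directions are parallel.  The curvature then gives
     Ric((b,Y),(c,Z)) = Ric^g(b,c) - tr A (sff b c) - tr (A Z A Y),
   every other contribution being the trace of ad x, of a skew-adjoint map, of a
   skew-adjoint times a self-adjoint map, or of a derivation times ad x, all of which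
   vanish on a nilpotent g.  The hypothesis kills tr (A Z A Y), and
   tr A (sff b c) = <sff b c, H> = <A H b, c> = 0 as soon as the trace form is
   represented by an H with A H = 0: take H = 0 in part (1), and the added element H,
   whose pairing with a is the trace by construction, in part (2).  Finally a is
   abelian, since a commutator of self-adjoint maps is skew-adjoint. *)

From Pilot Require Import Defs.
From mathcomp Require Import all_boot all_order all_algebra.
From mathcomp Require Import reals.
From mathcomp Require Import ring lra.
Import GRing.Theory Num.Theory.
Local Open Scope ring_scope.
Set Implicit Arguments.
Unset Strict Implicit.
Unset Printing Implicit Defensive.
Local Notation form := Pilot.Defs.form.

Ltac mx_ring := let i := fresh "i" in let j := fresh "j" in
  apply/matrixP => i j; rewrite !mxE; ring.

Section LinearMaps.
Variables (R : realType) (p : nat).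

Section ScaleLaw.
Variables (V : zmodType) (s : GRing.Scale.law R V) (f : 'cV[R]_p -> V).
Hypothesis lin_f : linear_for s f.

Lemma linB u v : f (u - v) = f u - f v.
Proof. exact: zmod_morphism_linear. Qed.

Lemma lin0 : f 0 = 0.
Proof. by move: (linB 0 0); rewrite !subrr. Qed.

Lemma linN u : f (- u) = - f u.
Proof. by rewrite -[- u]sub0r linB lin0 sub0r. Qed.

Lemma linD u v : f (u + v) = f u + f v.
Proof. by move: (linB u (- v)); rewrite opprK linN opprK. Qed.

Lemma linZ a u : f (a *: u) = s a (f u).
Proof. exact: scalable_linear. Qed.

Lemma lin_sum (I : Type) (r : seq I) (P : pred I) (c : I -> R) (w : I -> 'cV[R]_p) :
  f (\sum_(i <- r | P i) c i *: w i) = \sum_(i <- r | P i) s (c i) (f (w i)).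
Proof.
elim/big_rec2: _ => [|i y1 y2 _ <-]; first exact: lin0.
by rewrite linD linZ.
Qed.

End ScaleLaw.

Lemma cV_basis (u : 'cV[R]_p) : u = \sum_j u j 0 *: ev R j.
Proof.
apply/matrixP => i j0; rewrite ord1 summxE (bigD1 i) //= big1 ?addr0.
  by rewrite !mxE !eqxx mulr1.
by move=> j /negbTE ne; rewrite !mxE eq_sym ne mulr0.
Qed.

Lemma scalar_basis (f : 'cV[R]_p -> R) u :
  scalar f -> f u = \sum_j u j 0 * f (ev R j).
Proof. by move=> lin_f; rewrite {1}(cV_basis u) (lin_sum lin_f). Qed.

Definition mxof q (f : 'cV[R]_p -> 'cV[R]_q) : 'M[R]_(q, p) :=
  \matrix_(i, j) f (ev R j) i 0.

Lemma mxofE q (f : 'cV[R]_p -> 'cV[R]_q) u : linear f -> mxof f *m u = f u.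
Proof.
move=> lin_f; rewrite [in RHS](cV_basis u) (lin_sum lin_f).
apply/matrixP => i j; rewrite ord1 summxE !mxE.
by apply: eq_bigr => k _; rewrite !mxE mulrC.
Qed.

Lemma mxtrace_ev (M : 'M[R]_p) : \sum_i (M *m ev R i) i 0 = \tr M.
Proof. by apply: eq_bigr => i _; rewrite /ev -colE !mxE. Qed.

End LinearMaps.

Lemma mulmx_cV_eq0 (R : realType) p q (M : 'M[R]_(p, q)) :
  (forall u : 'cV[R]_q, M *m u = 0) -> M = 0.
Proof.
move=> M0; apply/matrixP => i j; have /matrixP/(_ i 0) := M0 (ev R j).
by rewrite /ev -colE !mxE.
Qed.

Section BilinearForms.
Variables (R : realType) (N : nat) (G : 'M[R]_N).
Implicit Types u v w : 'cV[R]_N.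

Lemma form_scalarl v : scalar (form G ^~ v).
Proof. by move=> a u w; rewrite /form linearD /= linearZ /= !mulmxDl -!scalemxAl !mxE. Qed.

Lemma form_scalarr v : scalar (form G v).
Proof. by move=> a u w; rewrite /form !mulmxDr -!scalemxAr !mxE. Qed.

Lemma form0l v : form G 0 v = 0. Proof. exact: lin0 (form_scalarl v). Qed.
Lemma form0r v : form G v 0 = 0. Proof. exact: lin0 (form_scalarr v). Qed.
Lemma formDl u w v : form G (u + w) v = form G u v + form G w v.
Proof. exact: (linD (s := *%R) (form_scalarl v)). Qed.
Lemma formDr u w v : form G v (u + w) = form G v u + form G v w.
Proof. exact: (linD (s := *%R) (form_scalarr v)). Qed.
Lemma formBl u w v : form G (u - w) v = form G u v - form G w v.
Proof. exact: (linB (s := *%R) (form_scalarl v)). Qed.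
Lemma formBr u w v : form G v (u - w) = form G v u - form G v w.
Proof. exact: (linB (s := *%R) (form_scalarr v)). Qed.
Lemma formNl u v : form G (- u) v = - form G u v.
Proof. exact: (linN (s := *%R) (form_scalarl v)). Qed.
Lemma formZl a u v : form G (a *: u) v = a * form G u v.
Proof. exact: (linZ (s := *%R) (form_scalarl v)). Qed.
Lemma formZr a u v : form G v (a *: u) = a * form G v u.
Proof. exact: (linZ (s := *%R) (form_scalarr v)). Qed.

Lemma form_sym u v : G^T = G -> form G u v = form G v u.
Proof.
move=> sG; have trE (M : 'M[R]_1) : M 0 0 = M^T 0 0 by rewrite mxE.
by rewrite /form trE !trmx_mul trmxK sG mulmxA.
Qed.

Lemma form_mulmxl (M : 'M[R]_N) u v : form G (M *m u) v = form (M^T *m G) u v.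
Proof. by rewrite /form trmx_mul !mulmxA. Qed.

Lemma form_mulmxr (M : 'M[R]_N) u v : form G u (M *m v) = form (G *m M) u v.
Proof. by rewrite /form !mulmxA. Qed.

Lemma form_ev i j : form G (ev R i) (ev R j) = G i j.
Proof. by rewrite /form /ev trmx_delta -rowE -colE !mxE. Qed.

Lemma form_invmx u v : G \in unitmx -> form G u (invmx G *m v) = (u^T *m v) 0 0.
Proof. by move=> uG; rewrite /form -mulmxA (mulmxA G) mulmxV // mul1mx. Qed.

Lemma form_nondeg u : G \in unitmx -> (forall w, form G u w = 0) -> u = 0.
Proof.
move=> uG u0; apply/matrixP => i j; rewrite ord1.
by have := u0 (invmx G *m ev R i); rewrite form_invmx // /ev -colE !mxE => ->.
Qed.

Lemma form_injl u v : G \in unitmx -> (forall w, form G u w = form G v w) -> u = v.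
Proof.
move=> uG uv; apply/eqP; rewrite -subr_eq0; apply/eqP/(form_nondeg uG) => w.
by rewrite formBl uv subrr.
Qed.

End BilinearForms.

Lemma form_mx_inj (R : realType) N (G G' : 'M[R]_N) :
  (forall u v, form G u v = form G' u v) -> G = G'.
Proof. by move=> GG'; apply/matrixP => i j; rewrite -!form_ev GG'. Qed.

Definition skew_adjoint (R : realType) N (G L : 'M[R]_N) :=
  forall x y, form G (L *m x) y = - form G x (L *m y).

Section Adjoints.
Variables (R : realType) (N : nat) (G : 'M[R]_N).
Hypothesis uG : G \in unitmx.

Lemma self_adjointE D : self_adjoint G D <-> D^T *m G = G *m D.
Proof.
split=> [saD|DG x y]; last by rewrite form_mulmxl DG -form_mulmxr.
by apply: form_mx_inj => x y; rewrite -form_mulmxl -form_mulmxr saD.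
Qed.

Lemma skew_adjointE L : skew_adjoint G L <-> L^T *m G = - (G *m L).
Proof.
have formNmx (M : 'M[R]_N) x y : form (- M) x y = - form M x y.
  by rewrite /form mulmxN mulNmx mxE.
split=> [skL|LG x y]; last by rewrite form_mulmxl LG formNmx -form_mulmxr.
by apply: form_mx_inj => x y; rewrite formNmx -form_mulmxl -form_mulmxr skL.
Qed.

Lemma mxtrace_skew_self_adjoint L D :
  skew_adjoint G L -> self_adjoint G D -> \tr (L *m D) = 0.
Proof.
move=> /skew_adjointE LG /self_adjointE DG.
suff : \tr (L *m D) = - \tr (L *m D) by lra.
rewrite -{1}(mul1mx L) -(mulVmx uG) -!mulmxA (mulmxA G).
have -> : G *m L = - (L^T *m G) by rewrite LG opprK.
rewrite mulNmx mulmxN linearN /= -(mulmxA L^T) -DG mxtrace_mulC.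
rewrite (mulmxA L^T) -(mulmxA (L^T *m D^T)) mulmxV // mulmx1.
by rewrite -trmx_mul mxtrace_tr mxtrace_mulC.
Qed.

Lemma mxtrace_skew_adjoint L : skew_adjoint G L -> \tr L = 0.
Proof.
move=> skL; rewrite -[L]mulmx1; apply: mxtrace_skew_self_adjoint => // x y.
by rewrite !mul1mx.
Qed.

Lemma commutator_self_adjoint D1 D2 :
  self_adjoint G D1 -> self_adjoint G D2 -> skew_adjoint G (D1 *m D2 - D2 *m D1).
Proof.
move=> sa1 sa2 x y.
by rewrite !mulmxBl formBl formBr -!mulmxA sa1 sa2 sa2 sa1 opprB.
Qed.

Lemma self_adjoint_skew_eq0 L : self_adjoint G L -> skew_adjoint G L -> L = 0.
Proof.
move=> saL skL; apply: mulmx_cV_eq0 => x; apply: (form_nondeg uG) => y.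
by have := skL x y; rewrite -saL; lra.
Qed.

End Adjoints.

Lemma self_adjoint_swap (R : realType) N (G D : 'M[R]_N) u v :
  G^T = G -> self_adjoint G D -> form G (D *m u) v = form G (D *m v) u.
Proof. by move=> sG saD; rewrite saD form_sym. Qed.

Lemma form_nondeg_unitmx (R : realType) N (G : 'M[R]_N) :
  (forall u, (forall w, form G u w = 0) -> u = 0) -> G \in unitmx.
Proof.
move=> nondegG; rewrite -row_free_unit; apply: inj_row_free => v vG0.
apply: trmx_inj; rewrite trmx0; apply: nondegG => w.
by rewrite /form trmxK vG0 mul0mx mxE.
Qed.

Section LeviCivita.
Variables (R : realType) (N : nat) (br : 'cV[R]_N -> 'cV[R]_N -> 'cV[R]_N).
Variable G : 'M[R]_N.
Hypotheses (Lbr : lie_bracket br) (MG : is_metric G).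
Implicit Types x y u v w : 'cV[R]_N.

Lemma bracket_linearl w : linear (br ^~ w).
Proof. by case: Lbr => linl _ _ _ a u v; rewrite linl. Qed.

Lemma bracket_linearr u : linear (br u).
Proof. by case: Lbr => _ linr _ _ a v w; rewrite linr. Qed.

Lemma bracket_anticomm u v : br u v = - br v u.
Proof.
case: Lbr => _ _ alt _; apply/eqP; rewrite -addr_eq0; apply/eqP.
have := alt (u + v).
by rewrite (linD (bracket_linearl _)) !(linD (bracket_linearr _)) !alt add0r addr0.
Qed.

Local Notation koszul x y w :=
  (form G (br x y) w - form G (br y w) x + form G (br w x) y).

Lemma nabla_koszul x y w : form G (nabla br G x y) w = 2^-1 * koszul x y w.
Proof.
have [sG uG] := MG; rewrite form_sym // form_invmx //.
have lin_koszul : scalar (fun w => koszul x y w).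
  move=> a u v; rewrite formDr (bracket_linearr y) (bracket_linearl x) !formDl.
  by rewrite formZr !formZl /=; ring.
rewrite (scalar_basis w lin_koszul) mulr_sumr mxE.
by apply: eq_bigr => k _; rewrite !mxE; ring.
Qed.

Lemma nabla_unique x y v :
  (forall w, form G v w = 2^-1 * koszul x y w) -> nabla br G x y = v.
Proof. by move=> Kv; apply: (form_injl MG.2) => w; rewrite Kv nabla_koszul. Qed.

Lemma nabla_linearr x : linear (nabla br G x).
Proof.
move=> a u v; apply: (form_injl MG.2) => w.
rewrite formDl formZl !nabla_koszul (bracket_linearr x) (bracket_linearl w).
by rewrite !formDl !formDr !formZl !formZr; ring.
Qed.

Lemma nabla_linearl y : linear (nabla br G ^~ y).
Proof.
move=> a u v; apply: (form_injl MG.2) => w.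
rewrite formDl formZl !nabla_koszul (bracket_linearl y) (bracket_linearr w).
by rewrite !formDl !formDr !formZl !formZr; ring.
Qed.

Lemma nabla_torsion_free x y : nabla br G x y - nabla br G y x = br x y.
Proof.
apply: (form_injl MG.2) => w.
rewrite formBl !nabla_koszul (bracket_anticomm y x) (bracket_anticomm x w).
by rewrite (bracket_anticomm w y) !formNl; lra.
Qed.

Lemma nabla_metric x y w : form G (nabla br G x y) w = - form G y (nabla br G x w).
Proof.
rewrite [form G y _]form_sym ?MG.1 // !nabla_koszul.
rewrite (bracket_anticomm y x) (bracket_anticomm x w) (bracket_anticomm w y) !formNl.
by ring.
Qed.

Definition nabla_mx x := mxof (nabla br G x).

Lemma nabla_mxE x v : nabla_mx x *m v = nabla br G x v.
Proof. exact/mxofE/nabla_linearr. Qed.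

Lemma nabla_mx_skew x : skew_adjoint G (nabla_mx x).
Proof. by move=> u v; rewrite !nabla_mxE nabla_metric. Qed.

End LeviCivita.

Lemma mxtrace_nilpotent (F : fieldType) n (M : 'M[F]_n) k : M ^+ k = 0 -> \tr M = 0.
Proof.
(* char_poly M divides det (X^k I) = X^(k * n), so it is X^n, whose coefficient
   of X^(n-1), namely - \tr M, vanishes. *)
case: n M => [|p] M Mk; first by rewrite /mxtrace big_ord0.
pose Xm : 'M[{poly F}]_p.+1 := ('X)%:M.
pose Mp : 'M[{poly F}]_p.+1 := map_mx polyC M.
have cXM : GRing.comm Xm Mp by rewrite /GRing.comm /Xm -!mulmxE scalar_mxC.
have Xmk : Xm ^+ k = ('X^k)%:M.
  by elim: k {Mk} => [|k IHk]; rewrite ?expr0 // exprS IHk -mulmxE -scalar_mxM exprS.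
have := subrXX_comm k cXM; rewrite Xmk.
have -> : Mp ^+ k = 0 by rewrite /Mp -rmorphXn Mk rmorph0.
rewrite subr0 => XkE.
have : char_poly M %| ('X - 0%:P) ^+ (k * p.+1).
  rewrite subr0 exprM; apply/dvdpP.
  exists (\det (\sum_(i < k) Xm ^+ (k.-1 - i) * Mp ^+ i)).
  by rewrite -det_scalar XkE -mulmxE det_mulmx mulrC.
case/dvdp_exp_XsubCP => d _; rewrite subr0.
rewrite eqp_monic ?char_poly_monic ?monicXn // => /eqP charM.
have dE : d = p.+1 by have := size_char_poly M; rewrite charM size_polyXn => -[].
have := char_poly_trace M (ltn0Sn p); rewrite charM dE coefXn /= eqn_leq ltnn /= andbF.
by move/eqP; rewrite eq_sym oppr_eq0 => /eqP.
Qed.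

Section NilpotentTraces.
Variables (R : realType) (N : nat) (br : 'cV[R]_N -> 'cV[R]_N -> 'cV[R]_N).
Hypotheses (Lbr : lie_bracket br) (nil_br : nilpotent_lie br).

Inductive lower_central (j : nat) : 'cV[R]_N -> Prop :=
| lower_central0 : lower_central j 0
| lower_central_comb a u v :
    lower_central j u -> lower_central j v -> lower_central j (a *: u + v)
| lower_central_bracket xs y : size xs = j -> lower_central j (foldr br y xs).

Lemma lower_central_bracketl j x v :
  lower_central j v -> lower_central j.+1 (br x v).
Proof.
elim=> [|a u w _ IHu _ IHw|xs y size_xs].
- by rewrite (lin0 (bracket_linearr Lbr x)); apply: lower_central0.
- by rewrite (bracket_linearr Lbr x); apply: lower_central_comb.
- by apply: (@lower_central_bracket _ (x :: xs)); rewrite /= size_xs.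
Qed.

Lemma lower_central_derivation j D v :
  derivation br D -> lower_central j v -> lower_central j (D *m v).
Proof.
move=> derD; elim=> [|a u w _ IHu _ IHw|xs y <-].
- by rewrite mulmx0; apply: lower_central0.
- by rewrite mulmxDr -scalemxAr; apply: lower_central_comb.
- elim: xs => [|x xs IHxs] /=; first exact: (@lower_central_bracket _ [::]).
  rewrite derD -[br (D *m x) _]scale1r; apply: lower_central_comb.
    exact: (@lower_central_bracket _ (D *m x :: xs)).
  exact: lower_central_bracketl.
Qed.

Lemma mxtrace_lower_central_raising M :
  (forall j v, lower_central j v -> lower_central j.+1 (M *m v)) -> \tr M = 0.
Proof.
move=> raiseM; have [k nil_k] := nil_br; apply: (@mxtrace_nilpotent _ _ _ k).
apply: mulmx_cV_eq0 => v; have : lower_central k (M ^+ k *m v).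
  elim: k {nil_k} => [|k IHk].
    by rewrite expr0 mul1mx; apply: (@lower_central_bracket _ [::]).
  by rewrite exprS -mulmxE -mulmxA; apply: raiseM.
elim=> [//|a u w _ -> _ ->|]; first by rewrite scaler0 addr0.
exact: nil_k.
Qed.

Definition ad_mx x := mxof (br x).

Lemma ad_mxE x v : ad_mx x *m v = br x v.
Proof. exact/mxofE/bracket_linearr. Qed.

Lemma mxtrace_ad x : \tr (ad_mx x) = 0.
Proof.
apply: mxtrace_lower_central_raising => j v ?.
by rewrite ad_mxE; apply: lower_central_bracketl.
Qed.

Lemma mxtrace_derivation_ad D x : derivation br D -> \tr (D *m ad_mx x) = 0.
Proof.
move=> derD; apply: mxtrace_lower_central_raising => j v ?.
by rewrite -mulmxA ad_mxE; apply/lower_central_derivation/lower_central_bracketl.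
Qed.

End NilpotentTraces.

Section BlockMetric.
Variables (R : realType) (n k : nat) (G : 'M[R]_n) (Gb : 'M[R]_k).

Lemma form_block_diag a X b Y :
  form (block_mx G 0 0 Gb) (col_mx a X) (col_mx b Y) = form G a b + form Gb X Y.
Proof.
by rewrite /form tr_col_mx mul_row_block !mulmx0 addr0 add0r mul_row_col mxE.
Qed.

Lemma is_metric_block : is_metric G -> is_metric Gb -> is_metric (block_mx G 0 0 Gb).
Proof.
move=> [sG uG] [sGb uGb]; split; first by rewrite tr_block_mx sG sGb !trmx0.
by rewrite unitmxE det_lblock unitrM -!unitmxE uG uGb.
Qed.

Lemma ev_lshift (i : 'I_n) : ev R (lshift k i) = col_mx (ev R i) 0.
Proof.
rewrite -[LHS]vsubmxK; congr col_mx; apply/matrixP => i' j; rewrite !mxE.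
  by rewrite eq_lshift.
by rewrite eq_rlshift.
Qed.

Lemma ev_rshift (i : 'I_k) : ev R (rshift n i) = col_mx 0 (ev R i).
Proof.
rewrite -[LHS]vsubmxK; congr col_mx; apply/matrixP => i' j; rewrite !mxE.
  by rewrite eq_lrshift.
by rewrite eq_rshift.
Qed.

Lemma ricci_block br (Gt : 'M[R]_(n + k)) y z :
  ricci br Gt y z =
  \sum_(i < n) (usubmx (curv br Gt (col_mx (ev R i) 0) y z)) i 0 +
  \sum_(i < k) (dsubmx (curv br Gt (col_mx 0 (ev R i)) y z)) i 0.
Proof.
rewrite /ricci big_split_ord /=; congr (_ + _); apply: eq_bigr => i _.
  by rewrite ev_lshift !mxE.
by rewrite ev_rshift !mxE.
Qed.

End BlockMetric.

Section SemidirectProduct.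
Variables (R : realType) (n k : nat) (bg : 'cV[R]_n -> 'cV[R]_n -> 'cV[R]_n).
Variables (A : 'cV[R]_k -> 'M[R]_n) (bb : 'cV[R]_k -> 'cV[R]_k -> 'cV[R]_k).
Hypotheses (Lg : lie_bracket bg) (linA : linear A) (bb0 : forall x y, bb x y = 0).
Hypothesis derA : forall x, derivation bg (A x).
Hypothesis commA : forall x y, A x *m A y = A y *m A x.

Local Notation br := (semibr bg A bb).

Lemma semibr_col a X b Y :
  br (col_mx a X) (col_mx b Y) = col_mx (bg a b + A X *m b - A Y *m a) 0.
Proof. by rewrite /semibr !col_mxKu !col_mxKd bb0. Qed.

Lemma semibr_linearl w : linear (br ^~ w).
Proof.
move=> c u v; rewrite -[u]vsubmxK -[v]vsubmxK -[w]vsubmxK.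
rewrite scale_col_mx add_col_mx !semibr_col scale_col_mx add_col_mx scaler0 addr0.
congr col_mx; rewrite linA (bracket_linearl Lg) mulmxDl mulmxDr -scalemxAl -scalemxAr.
by mx_ring.
Qed.

Lemma semibr_linearr u : linear (br u).
Proof.
move=> c v w; rewrite -[u]vsubmxK -[v]vsubmxK -[w]vsubmxK.
rewrite scale_col_mx add_col_mx !semibr_col scale_col_mx add_col_mx scaler0 addr0.
congr col_mx; rewrite linA (bracket_linearr Lg) mulmxDl mulmxDr -scalemxAl -scalemxAr.
by mx_ring.
Qed.

Lemma semibr_jacobi u v w : br u (br v w) + br v (br w u) + br w (br u v) = 0.
Proof.
rewrite -[u]vsubmxK -[v]vsubmxK -[w]vsubmxK !semibr_col (lin0 linA) !mul0mx !subr0.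
rewrite !add_col_mx !addr0 -[RHS]col_mx0; congr col_mx.
set a := usubmx u; set b := usubmx v; set c := usubmx w.
set X := dsubmx u; set Y := dsubmx v; set Z := dsubmx w.
rewrite !(linB (bracket_linearr Lg _)) !(linD (bracket_linearr Lg _)) !mulmxDr !mulmxN !derA.
rewrite (bracket_anticomm Lg (A X *m b) c) (bracket_anticomm Lg (A Y *m c) a).
rewrite (bracket_anticomm Lg (A Z *m a) b) !mulmxA (commA X Y) (commA Y Z) (commA Z X).
have [_ _ _ jacobi_g] := Lg.
have -> : bg a (bg b c) = - (bg b (bg c a) + bg c (bg a b)).
  by apply/eqP; rewrite -addr_eq0 addrA jacobi_g.
by mx_ring.
Qed.

Lemma semibr_lie : lie_bracket br.
Proof.
split=> [c u v w|c u v w|u|]; [exact: semibr_linearl | exact: semibr_linearr | |].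
  rewrite -[u]vsubmxK semibr_col.
  by have [_ _ alt _] := Lg; rewrite alt add0r subrr col_mx0.
exact: semibr_jacobi.
Qed.

Variables (G : 'M[R]_n) (Gb : 'M[R]_k).
Hypotheses (MG : is_metric G) (MGb : is_metric Gb).
Hypothesis saA : forall x, self_adjoint G (A x).

Local Notation Gt := (block_mx G 0 0 Gb).

Lemma semibr_pseudo_iwasawa : nilpotent_lie bg -> pseudo_iwasawa br Gt.
Proof.
move=> [m nil_m]; split.
- by move=> v x; rewrite form_block_diag form0r form0l addr0.
- by move=> u v; rewrite -[u]vsubmxK semibr_col col_mxKd.
- exists m => xs y size_xs; rewrite -(nil_m xs y size_xs).
  elim: xs {size_xs} => [//|x xs IHxs] /=.
  by rewrite IHxs semibr_col col_mxKu (lin0 linA) !mul0mx subr0 addr0.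
- move=> x y; rewrite semibr_col (lin0 (bracket_linearl Lg 0)) !mulmx0 subr0 add0r.
  exact: col_mx0.
- move=> x u w; rewrite -[u]vsubmxK -[w]vsubmxK !semibr_col !form_block_diag.
  rewrite !(lin0 (bracket_linearl Lg _)) !mulmx0 !subr0 !add0r !form0l !form0r.
  by rewrite !addr0 saA.
Qed.

Definition sff (a b : 'cV[R]_n) : 'cV[R]_k :=
  invmx Gb *m \col_j form G (A (ev R j) *m a) b.

Lemma form_sff a b Z : form Gb (sff a b) Z = form G (A Z *m a) b.
Proof.
have lin_Z : scalar (fun Z => form G (A Z *m a) b).
  by move=> c Z1 Z2; rewrite linA mulmxDl -scalemxAl formDl formZl.
rewrite form_sym ?MGb.1 // form_invmx ?MGb.2 // mxE (scalar_basis Z lin_Z).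
by apply: eq_bigr => j _; rewrite !mxE.
Qed.

Lemma sff_linearl c : linear (sff ^~ c).
Proof.
move=> x a1 a2; apply: (form_injl MGb.2) => Z.
by rewrite formDl formZl !form_sff mulmxDr -scalemxAr formDl formZl.
Qed.

Lemma nabla_semibr a X b Y :
  nabla br Gt (col_mx a X) (col_mx b Y) =
  col_mx (nabla bg G a b - A Y *m a) (sff a b).
Proof.
apply: nabla_unique; [exact: semibr_lie | exact: is_metric_block |] => w.
rewrite -[w]vsubmxK; set c := usubmx w; set Z := dsubmx w.
rewrite !semibr_col !form_block_diag form_sff !form0l !addr0 formBl nabla_koszul //.
rewrite !formDl !formNl (self_adjoint_swap c a MG.1 (saA Y)).
by rewrite (self_adjoint_swap b a MG.1 (saA Z)) (self_adjoint_swap c b MG.1 (saA X)); lra.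
Qed.

Lemma nabla_semibr0l X v : nabla br Gt (col_mx 0 X) v = 0.
Proof.
rewrite -[v]vsubmxK nabla_semibr (lin0 (nabla_linearl Lg MG _)) mulmx0 subr0.
by rewrite (lin0 (sff_linearl _)) col_mx0.
Qed.

Lemma curv_semibr_b X b Y c Z :
  dsubmx (curv br Gt (col_mx 0 X) (col_mx b Y) (col_mx c Z)) = - sff (A X *m b) c.
Proof.
rewrite /curv !nabla_semibr0l (lin0 (nabla_linearr semibr_lie (is_metric_block MG MGb) _)).
rewrite semibr_col nabla_semibr subrr sub0r linearN /= col_mxKd.
by rewrite (lin0 (bracket_linearl Lg _)) mulmx0 subr0 add0r.
Qed.

Definition act_mx b : 'M[R]_(n, k) := mxof (fun w => A w *m b).

Lemma act_mxE b w : act_mx b *m w = A w *m b.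
Proof. by apply: mxofE => x u v; rewrite linA mulmxDl -scalemxAl. Qed.

Definition sff_mx c : 'M[R]_(k, n) := mxof (sff ^~ c).

Lemma sff_mxE c a : sff_mx c *m a = sff a c.
Proof. exact/mxofE/sff_linearl. Qed.

Definition curv_semibr_mx b Y c Z : 'M[R]_n :=
  ad_mx bg (A Z *m b) - nabla_mx bg G (A Z *m b) - A (sff b c)
  + nabla_mx bg G b *m A Z + act_mx b *m sff_mx c
  + nabla_mx bg G c *m A Y - ad_mx bg c *m A Y - A Z *m ad_mx bg b - A Z *m A Y.

Lemma curv_semibr_g a b Y c Z :
  usubmx (curv br Gt (col_mx a 0) (col_mx b Y) (col_mx c Z)) =
  curv bg G a b c + curv_semibr_mx b Y c Z *m a.
Proof.
rewrite /curv semibr_col !nabla_semibr !linearB /= !col_mxKu (lin0 linA) mul0mx addr0.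
rewrite (linB (nabla_linearr Lg MG a)) (linB (nabla_linearr Lg MG b)).
rewrite (linB (nabla_linearl Lg MG c)) /curv_semibr_mx !mulmxDl !mulNmx -!mulmxA.
rewrite !nabla_mxE // !ad_mxE // !act_mxE !sff_mxE.
have torsion_a : nabla bg G a (A Z *m b) = nabla bg G (A Z *m b) a - bg (A Z *m b) a.
  by rewrite -(bracket_anticomm Lg a) -(nabla_torsion_free Lg MG) addrC subrK.
have torsion_c : nabla bg G (A Y *m a) c = nabla bg G c (A Y *m a) - bg c (A Y *m a).
  by rewrite -(bracket_anticomm Lg _ c) -(nabla_torsion_free Lg MG) addrC subrK.
rewrite torsion_a torsion_c (bracket_anticomm Lg a b) !mulmxN.
by mx_ring.
Qed.

Lemma mxtrace_curv_semibr_mx b Y c Z : nilpotent_lie bg ->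
  \tr (curv_semibr_mx b Y c Z) =
  \tr (act_mx b *m sff_mx c) - \tr (A (sff b c)) - \tr (A Z *m A Y).
Proof.
move=> nil_g; rewrite /curv_semibr_mx !linearD !linearN /= (mxtrace_ad Lg nil_g).
rewrite (mxtrace_skew_adjoint MG.2 (nabla_mx_skew Lg MG _)).
rewrite !(mxtrace_skew_self_adjoint MG.2 (nabla_mx_skew Lg MG _) (saA _)).
rewrite (mxtrace_mulC (ad_mx bg c)) !mxtrace_derivation_ad //.
by ring.
Qed.

(* The act_mx b *m sff_mx c contributions of the g- and b-directions cancel by
   cyclicity of the trace. *)
Lemma ricci_semibr b Y c Z : nilpotent_lie bg ->
  ricci br Gt (col_mx b Y) (col_mx c Z) =
  ricci bg G b c - \tr (A (sff b c)) - \tr (A Z *m A Y).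
Proof.
move=> nil_g; rewrite ricci_block.
under eq_bigr do rewrite curv_semibr_g mxE.
under [X in _ + X]eq_bigr do rewrite curv_semibr_b -sff_mxE -act_mxE mulmxA -mulNmx.
rewrite big_split /= !mxtrace_ev mxtrace_curv_semibr_mx // linearN /= mxtrace_mulC.
by rewrite /ricci; ring.
Qed.

Lemma ricci_flat_semibr : nilpotent_lie bg -> ricci_flat bg G ->
  (forall x y, \tr (A x *m A y) = 0) -> (forall b c, \tr (A (sff b c)) = 0) ->
  ricci_flat br Gt.
Proof.
move=> nil_g flat_g trAA trA y z; rewrite -[y]vsubmxK -[z]vsubmxK.
by rewrite ricci_semibr // flat_g trA trAA !subr0.
Qed.

Lemma mxtrace_sff_eq0 H b c :
  A H = 0 -> (forall x, \tr (A x) = form Gb x H) -> \tr (A (sff b c)) = 0.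
Proof. by move=> AH0 trH; rewrite trH form_sff AH0 mul0mx form0l. Qed.

(* H represents the trace form x |-> \tr (A x): it is 0 in part (1) and the
   added element H in part (2). *)
Lemma semibr_ricci_flat_pseudo_iwasawa :
  nilpotent_lie bg -> ricci_flat bg G -> (forall x y, \tr (A x *m A y) = 0) ->
  (exists2 H, A H = 0 & forall x, \tr (A x) = form Gb x H) ->
  lie_bracket br /\ is_metric Gt /\ ricci_flat br Gt /\ pseudo_iwasawa br Gt.
Proof.
move=> nil_g flat_g trAA [H AH0 trH]; split; first exact: semibr_lie.
split; first exact: is_metric_block.
split; last exact: semibr_pseudo_iwasawa.
by apply: ricci_flat_semibr => // b c; apply: mxtrace_sff_eq0 AH0 trH.
Qed.

End SemidirectProduct.

Section DerivationSpan.
Variables (R : realType) (n m : nat) (D : 'I_m -> 'M[R]_n).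

Lemma comb_linear : linear (comb D).
Proof.
move=> a u v; rewrite /comb scaler_sumr -big_split /=; apply: eq_bigr => i _.
by rewrite !mxE scalerDl scalerA.
Qed.

Lemma comb_mulmx x (u : 'cV[R]_n) : comb D x *m u = \sum_i x i 0 *: (D i *m u).
Proof. by rewrite /comb mulmx_suml; apply: eq_bigr => i _; rewrite -scalemxAl. Qed.

Lemma mxtrace_comb x : \tr (comb D x) = \sum_i x i 0 * \tr (D i).
Proof. by rewrite /comb linear_sum; apply: eq_bigr => i _; rewrite linearZ. Qed.

Lemma comb_self_adjoint G x :
  (forall i, self_adjoint G (D i)) -> self_adjoint G (comb D x).
Proof.
move=> saD; apply/self_adjointE.
rewrite /comb linear_sum mulmx_suml mulmx_sumr; apply: eq_bigr => i _.
by rewrite linearZ /= -scalemxAl -scalemxAr; congr (_ *: _); apply/self_adjointE.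
Qed.

Lemma comb_derivation bg x : lie_bracket bg ->
  (forall i, derivation bg (D i)) -> derivation bg (comb D x).
Proof.
move=> Lg derD u v; rewrite !comb_mulmx.
rewrite (lin_sum (bracket_linearl Lg v)) (lin_sum (bracket_linearr Lg u)) -big_split.
by apply: eq_bigr => i _; rewrite derD scalerDr.
Qed.

Lemma comb_comm x y : (forall i j, D i *m D j = D j *m D i) ->
  comb D x *m comb D y = comb D y *m comb D x.
Proof.
move=> commD; have combM x' y' : comb D x' *m comb D y' =
    \sum_i \sum_j (x' i 0 * y' j 0) *: (D i *m D j).
  rewrite /comb mulmx_suml; apply: eq_bigr => i _; rewrite mulmx_sumr.
  by apply: eq_bigr => j _; rewrite -scalemxAl -scalemxAr scalerA.
rewrite !combM exchange_big /=; apply: eq_bigr => i _; apply: eq_bigr => j _.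
by rewrite mulrC commD.
Qed.

Variables (G : 'M[R]_n) (ca : 'I_m -> 'I_m -> 'cV[R]_m).
Hypotheses (MG : is_metric G) (saD : forall i, self_adjoint G (D i)).
Hypothesis indepD : lin_indep D.
Hypothesis caD : forall i j, D i *m D j - D j *m D i = comb D (ca i j).

Lemma structure_constants_eq0 i j : ca i j = 0.
Proof.
apply: indepD; apply: (self_adjoint_skew_eq0 MG.2 (comb_self_adjoint _ saD)).
by rewrite -caD; apply: commutator_self_adjoint.
Qed.

Lemma derivations_comm i j : D i *m D j = D j *m D i.
Proof.
by apply/eqP; rewrite -subr_eq0 caD structure_constants_eq0 (lin0 comb_linear).
Qed.

Lemma bra_eq0 x y : bra ca x y = 0.
Proof.
rewrite /bra big1 // => i _; rewrite big1 // => j _.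
by rewrite structure_constants_eq0 scaler0.
Qed.

End DerivationSpan.

Section TraceExtension.
Variables (R : realType) (n m : nat) (D : 'I_m -> 'M[R]_n) (Ga : 'M[R]_m).

Local Notation eH := (col_mx 0 1 : 'cV[R]_(m + 1)).

Lemma form_metricH x h y h' :
  form (metricH D Ga) (col_mx x h) (col_mx y h') =
  form Ga x y + h' 0 0 * \tr (comb D x) + h 0 0 * \tr (comb D y).
Proof.
have traces_l z : z^T *m \matrix_(i < m, j < 1) \tr (D i) = (\tr (comb D z))%:M.
  apply/matrixP => i j; rewrite !ord1 !mxE mxtrace_comb.
  by apply: eq_bigr => l _; rewrite !mxE.
have traces_r z : \matrix_(i < 1, j < m) \tr (D j) *m z = (\tr (comb D z))%:M.
  apply/matrixP => i j; rewrite !ord1 !mxE mxtrace_comb.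
  by apply: eq_bigr => l _; rewrite !mxE mulrC.
rewrite /form /metricH tr_col_mx mul_row_block mulmx0 addr0 mul_row_col !mulmxDl.
rewrite traces_l -(mulmxA h^T) traces_r mul_mx_scalar mul_scalar_mx !mxE.
by ring.
Qed.

Lemma is_metric_metricH : is_metric Ga ->
  nondeg_on (fun x => \tr (comb D x) = 0) Ga ->
  (exists x, \tr (comb D x) != 0) -> is_metric (metricH D Ga).
Proof.
move=> [sGa _] nondeg_a0 [x1 trx1]; split.
  rewrite /metricH tr_block_mx sGa trmx0.
  by congr block_mx; apply/matrixP => i j; rewrite !mxE.
apply: form_nondeg_unitmx => u orth_u; rewrite -[u]vsubmxK.
move: (usubmx u) (dsubmx u) (vsubmxK u) => x h uE.
have orth (y : 'cV[R]_m) (h' : 'cV[R]_1) :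
    form Ga x y + h' 0 0 * \tr (comb D x) + h 0 0 * \tr (comb D y) = 0.
  by rewrite -form_metricH uE orth_u.
have trx : \tr (comb D x) = 0.
  have := orth 0 1; rewrite form0r (lin0 (comb_linear D)) mxtrace0 !mxE.
  by rewrite mulr0 addr0 add0r mul1r.
have x_eq0 : x = 0.
  apply: (nondeg_a0 _ trx) => y try; have := orth y 0.
  by rewrite try trx !mulr0 !addr0.
have h_eq0 : h = 0.
  apply/matrixP => i j; rewrite !ord1 mxE; have := orth x1 0.
  rewrite x_eq0 form0l !mxE mul0r !add0r => /eqP.
  by rewrite mulf_eq0 (negbTE trx1) orbF => /eqP.
by rewrite x_eq0 h_eq0 col_mx0.
Qed.

Lemma actH_linear : linear (actH D).
Proof. by move=> a u v; rewrite /actH linearD linearZ /= comb_linear. Qed.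

Lemma actH_eH : actH D eH = 0.
Proof. by rewrite /actH col_mxKu (lin0 (comb_linear D)). Qed.

Lemma mxtrace_actH z : \tr (actH D z) = form (metricH D Ga) z eH.
Proof.
rewrite -[z]vsubmxK form_metricH /actH col_mxKu form0r (lin0 (comb_linear D)).
by rewrite mxtrace0 !mxE mulr0 addr0 add0r mul1r.
Qed.

End TraceExtension.

Theorem proposition4p14 (R : realType) (n m : nat)
  (bg : 'cV[R]_n -> 'cV[R]_n -> 'cV[R]_n) (G : 'M[R]_n)
  (D : 'I_m -> 'M[R]_n) (ca : 'I_m -> 'I_m -> 'cV[R]_m) :
  lie_bracket bg -> nilpotent_lie bg -> is_metric G -> ricci_flat bg G ->
  (forall i, derivation bg (D i)) -> (forall i, self_adjoint G (D i)) ->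
  lin_indep D ->
  (forall i j, D i *m D j - D j *m D i = comb D (ca i j)) ->
  (forall x y : 'cV[R]_m, \tr (comb D x *m comb D y) = 0) ->
  ((forall x : 'cV[R]_m, \tr (comb D x) = 0) ->
     forall Ga : 'M[R]_m, is_metric Ga ->
       lie_bracket (semibr bg (comb D) (bra ca))
       /\ is_metric (block_mx G 0 0 Ga)
       /\ ricci_flat (semibr bg (comb D) (bra ca)) (block_mx G 0 0 Ga)
       /\ pseudo_iwasawa (semibr bg (comb D) (bra ca)) (block_mx G 0 0 Ga))
  /\
  ((exists x : 'cV[R]_m, \tr (comb D x) != 0) ->
     forall Ga : 'M[R]_m, is_metric Ga ->
       nondeg_on (fun x => \tr (comb D x) = 0) Ga ->
       lie_bracket (semibr bg (actH D) (braH ca))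
       /\ is_metric (block_mx G 0 0 (metricH D Ga))
       /\ ricci_flat (semibr bg (actH D) (braH ca)) (block_mx G 0 0 (metricH D Ga))
       /\ pseudo_iwasawa (semibr bg (actH D) (braH ca)) (block_mx G 0 0 (metricH D Ga))).
Proof.
move=> Lg nil_g MG flat_g derD saD indepD caD trDD.
have commD x y : comb D x *m comb D y = comb D y *m comb D x.
  exact/comb_comm/(derivations_comm MG saD indepD caD).
have derC x : derivation bg (comb D x) by apply: comb_derivation.
have saC x : self_adjoint G (comb D x) by apply: comb_self_adjoint.
have bra0 := bra_eq0 MG saD indepD caD.
split=> [trace_free Ga MGa | trace_nonzero Ga MGa nondeg_a0].
- apply: semibr_ricci_flat_pseudo_iwasawa => //; first exact: comb_linear.
  by exists 0 => [|x]; rewrite ?(lin0 (comb_linear D)) ?trace_free ?form0r.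
- apply: semibr_ricci_flat_pseudo_iwasawa => //.
  + exact: actH_linear.
  + by move=> x y; rewrite /braH bra0 col_mx0.
  + by move=> x; apply: derC.
  + by move=> x y; apply: commD.
  + exact: is_metric_metricH.
  + by move=> x; apply: saC.
  + by move=> x y; apply: trDD.
  + by exists (col_mx 0 1); [apply: actH_eH | apply: mxtrace_actH].
Qed.
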